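(* Fix an STL formula $\varphi$ and $t\in\tau$. Let $V$ be the finite set of pairs $(i,t')$ such that some predicate $s_i-\pi\ge0$ appears in a pair $(s_i-\pi\ge0,\,t')\in E(\varphi,t)$, and set $M=|V|$. Then $\eta(\varphi,S,t)$ depends on $S$ only through the vector $v(S)=(s_i[t'])_{(i,t')\in V}\in[-1,1]^M$; regard it as a function $H$ of $v\in\mathbb{R}^M$, computed by the same recursive formulas. Let $S$ be a signal such that $\eta(\psi,S,t')\neq0$ for every $(\psi,t')\in E(\varphi,t)$. Then there is an open neighborhood $U\subseteq\mathbb{R}^M$ of $v(S)$ on which $H$ is well defined and $C^\infty$. In particular, $\eta(\varphi,\cdot,t)$ is smooth at every signal outside the set where some subformula's robustness vanishes at one of its evaluation times.
   Context: Let $\tau\subseteq\mathbb{R}_{\ge 0}$ be a discrete set of time points (e.g. $\tau=\mathbb{Z}_{\ge0}$). For $t\in\tau$ and $0\le a<b$, write $[t+a,t+b]$ for the set of points $t'\in\tau$ with $t+a\le t'\le t+b$, assumed finite and nonempty, and write $N$ for its cardinality. A signal is a map $S:\tau\to[-1,1]^n$ with components $s_1,\dots,s_n$. STL formulas are generated by $\varphi::=\top\mid\bot\mid\mu\mid\neg\varphi\mid\varphi_1\wedge\cdots\wedge\varphi_m\mid\varphi_1\vee\cdots\vee\varphi_m\mid\mathbf{G}_{[a,b]}\varphi\mid\mathbf{F}_{[a,b]}\varphi$ ($m\ge 2$), where each predicate $\mu$ has the form $s_i-\pi\ge0$ with $i\in\{1,\dots,n\}$ and $\pi\in[-1,1]$.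 For $x\in\mathbb{R}$ put $[x]_+=\max(x,0)$, $[x]_-=\min(x,0)$. AGM robustness $\eta(\varphi,S,t)$ is defined recursively: $\eta(\top,S,t)=1$; $\eta(\bot,S,t)=-1$; $\eta(s_i-\pi\ge0,S,t)=\tfrac12(s_i[t]-\pi)$; $\eta(\neg\varphi,S,t)=-\eta(\varphi,S,t)$. Writing $\eta_j=\eta(\varphi_j,S,t)$: $\eta(\varphi_1\wedge\cdots\wedge\varphi_m,S,t)=\big(\prod_{j=1}^m(1+\eta_j)\big)^{1/m}-1$ if all $\eta_j>0$, and $\frac1m\sum_j[\eta_j]_-$ otherwise; $\eta(\varphi_1\vee\cdots\vee\varphi_m,S,t)=\frac1m\sum_j[\eta_j]_+$ if some $\eta_j>0$, and $1-\big(\prod_{j=1}^m(1-\eta_j)\big)^{1/m}$ otherwise. Writing $\eta_{t'}=\eta(\varphi,S,t')$ for $t'\in[t+a,t+b]$: $\eta(\mathbf{G}_{[a,b]}\varphi,S,t)=\big(\prod_{t'}(1+\eta_{t'})\big)^{1/N}-1$ if all $\eta_{t'}>0$, and $\frac1N\sum_{t'}[\eta_{t'}]_-$ otherwise; $\eta(\mathbf{F}_{[a,b]}\varphi,S,t)=\frac1N\sum_{t'}[\eta_{t'}]_+$ if some $\eta_{t'}>0$, and $1-\big(\prod_{t'}(1-\eta_{t'})\big)^{1/N}$ otherwise (products and sums over $t'\in[t+a,t+b]$). Evaluation pairs: $E(\varphi,t)$ is the smallest set of (formula, time) pairs containing $(\varphi,t)$ and closed under three rules. If $(\neg\psi,t')\in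 E$ then $(\psi,t')\in E$. If $(\psi_1\wedge\cdots\wedge\psi_m,t')$ or $(\psi_1\vee\cdots\vee\psi_m,t')$ is in $E$, then $(\psi_j,t')\in E$ for all $j$. If $(\mathbf{G}_{[a,b]}\psi,t')$ or $(\mathbf{F}_{[a,b]}\psi,t')$ is in $E$, then $(\psi,t'')\in E$ for all $t''\in[t'+a,t'+b]$. *)

From Stdlib Require Import Reals Lra Lia List.
Import ListNotations.
Open Scope R_scope.

Inductive stl : Type :=
| STop : stl
| SBot : stl
| SPred : nat -> R -> stl            (* SPred i pi  is  s_i - pi >= 0 *)
| SNeg : stl -> stl
| SAnd : list stl -> stl
| SOr : list stl -> stl
| SG : R -> R -> stl -> stl
| SF : R -> R -> stl -> stl.

Fixpoint wf (n : nat) (phi : stl) : Prop :=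
  match phi with
  | STop | SBot => True
  | SPred i pi => (1 <= i <= n)%nat /\ -1 <= pi <= 1
  | SNeg psi => wf n psi
  | SAnd l | SOr l =>
      (2 <= length l)%nat /\
      (fix all (l : list stl) : Prop :=
         match l with nil => True | psi :: l' => wf n psi /\ all l' end) l
  | SG a b psi | SF a b psi => 0 <= a < b /\ wf n psi
  end.

Definition sum_list (l : list R) : R := fold_right Rplus 0 l.
Definition prod_list (l : list R) : R := fold_right Rmult 1 l.
Definition posb (x : R) : bool := if Rlt_dec 0 x then true else false.

(** In the root branches the product is >= 1,
    so Rpower (real power of a positive number) is the usual m-th root. *)
Definition agm_and (xs : list R) : R :=
  let m := INR (length xs) in
  if forallb posb xs
  then Rpower (prod_list (map (fun x => 1 + x) xs)) (/ m) - 1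
  else sum_list (map (fun x => Rmin x 0) xs) / m.

Definition agm_or (xs : list R) : R :=
  let m := INR (length xs) in
  if existsb posb xs
  then sum_list (map (fun x => Rmax x 0) xs) / m
  else 1 - Rpower (prod_list (map (fun x => 1 - x) xs)) (/ m).

(** AGM robustness.  [win t a b] is the (finite) list of time points of
    [t+a, t+b] in tau, and [val i t'] is the value s_i[t'] of the signal. *)
Fixpoint eta (win : R -> R -> R -> list R) (val : nat -> R -> R)
         (phi : stl) (t : R) : R :=
  match phi with
  | STop => 1
  | SBot => -1
  | SPred i pi => (val i t - pi) / 2
  | SNeg psi => - eta win val psi t
  | SAnd l => agm_and (map (fun psi => eta win val psi t) l)
  | SOr l => agm_or (map (fun psi => eta win val psi t) l)
  | SG a b psi => agm_and (map (fun t' => eta win val psi t') (win t a b))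
  | SF a b psi => agm_or (map (fun t' => eta win val psi t') (win t a b))
  end.

(** Evaluation pairs: [inE tau phi t psi t'] means (psi, t') ∈ E(phi, t),
    the smallest set containing (phi,t) closed under the three rules. *)
Inductive inE (tau : R -> Prop) (phi : stl) (t : R) : stl -> R -> Prop :=
| E_root : inE tau phi t phi t
| E_neg : forall psi t', inE tau phi t (SNeg psi) t' -> inE tau phi t psi t'
| E_and : forall l psi t', inE tau phi t (SAnd l) t' -> In psi l ->
            inE tau phi t psi t'
| E_or : forall l psi t', inE tau phi t (SOr l) t' -> In psi l ->
            inE tau phi t psi t'
| E_G : forall a b psi t' t'', inE tau phi t (SG a b psi) t' ->
          tau t'' -> t' + a <= t'' <= t' + b -> inE tau phi t psi t''
| E_F : forall a b psi t' t'', inE tau phi t (SF a b psi) t' ->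
          tau t'' -> t' + a <= t'' <= t' + b -> inE tau phi t psi t''.

Definition pair_eq_dec (p q : nat * R) : {p = q} + {p <> q}.
Proof.
  destruct p as [i x], q as [j y].
  destruct (Nat.eq_dec i j) as [Hij|Hij]; [|right; congruence].
  destruct (Req_EM_T x y) as [Hxy|Hxy]; [left; congruence|right; congruence].
Defined.

Fixpoint idx (L : list (nat * R)) (p : nat * R) : nat :=
  match L with
  | nil => O
  | q :: L' => if pair_eq_dec p q then O else S (idx L' p)
  end.

(** R^M is represented by [nat -> R], only coordinates k < M being relevant. *)
Definition update (x : nat -> R) (k : nat) (h : R) : nat -> R :=
  fun j => if Nat.eq_dec j k then h else x j.

Definition open_in (M : nat) (U : (nat -> R) -> Prop) : Prop :=
  forall x, U x -> exists eps, 0 < eps /\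
    forall y, (forall k, (k < M)%nat -> Rabs (y k - x k) < eps) -> U y.

Definition cont_on (M : nat) (U : (nat -> R) -> Prop) (f : (nat -> R) -> R)
  : Prop :=
  forall x, U x -> forall eps, 0 < eps -> exists delta, 0 < delta /\
    forall y, U y -> (forall k, (k < M)%nat -> Rabs (y k - x k) < delta) ->
      Rabs (f y - f x) < eps.

Definition partial_at (f : (nat -> R) -> R) (k : nat) (x : nat -> R) (l : R)
  : Prop := derivable_pt_lim (fun h => f (update x k h)) (x k) l.

Fixpoint Ck_on (M : nat) (U : (nat -> R) -> Prop) (k : nat)
         (f : (nat -> R) -> R) : Prop :=
  match k with
  | O => cont_on M U f
  | S k' => cont_on M U f /\
      exists g : nat -> (nat -> R) -> R,
        (forall j, (j < M)%nat -> forall x, U x -> partial_at f j x (g j x)) /\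
        (forall j, (j < M)%nat -> Ck_on M U k' (g j))
  end.

Definition smooth_on (M : nat) (U : (nat -> R) -> Prop) (f : (nat -> R) -> R)
  : Prop := forall k, Ck_on M U k f.

(* Near a point x0 at which no subformula robustness vanishes, every
   subformula keeps a constant sign on a small ball.  Each AGM aggregation then
   stays in one branch of its definition, with its Rmin/Rmax cut-offs frozen:
   there it is a sum of smooth operands, or a real power of a product of
   factors 1 +- eta > 1, hence smooth, and it inherits the constant sign of
   its operands.  Induction over the evaluation pairs E(phi, t), shrinking the
   ball finitely often, gives smoothness and sign stability together. *)

From Stdlib Require Import Reals List Lra Lia FunctionalExtensionality.
Import ListNotations.
Open Scope R_scope.

Section Smoothness.

Variables (M : nat) (U : (nat -> R) -> Prop).

Lemma cont_on_ext f g : (forall x, U x -> f x = g x) -> cont_on M U g -> cont_on M U f.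
Proof.
  intros E Hg x Hx eps Heps. destruct (Hg x Hx eps Heps) as [d [Hd Hy]].
  exists d; split; auto. intros y Hyu Hk. rewrite (E x), (E y); auto.
Qed.

Lemma cont_on_subset V f : (forall x, V x -> U x) -> cont_on M U f -> cont_on M V f.
Proof.
  intros HV Hf x Hx eps Heps. destruct (Hf x (HV x Hx) eps Heps) as [d [Hd Hy]].
  exists d; split; auto.
Qed.

Lemma cont_on_const c : cont_on M U (fun _ => c).
Proof.
  intros x _ eps Heps. exists 1; split; [lra|].
  intros. rewrite Rminus_diag, Rabs_R0; lra.
Qed.

Lemma cont_on_proj m : (m < M)%nat -> cont_on M U (fun v => v m).
Proof. intros Hm x _ eps Heps. exists eps; split; auto. Qed.

Lemma cont_on_comp (h : R -> R) f :
  (forall x, U x -> continuity_pt h (f x)) -> cont_on M U f -> cont_on M U (fun v => h (f v)).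
Proof.
  intros Hh Hf x Hx eps Heps.
  destruct (Hh x Hx eps Heps) as [a [Ha Hha]].
  destruct (Hf x Hx a Ha) as [d [Hd Hfd]].
  exists d; split; auto. intros y Hy Hk.
  destruct (Req_dec (f y) (f x)) as [E|E].
  - rewrite E, Rminus_diag, Rabs_R0; lra.
  - apply (Hha (f y)). split; [split; [constructor|auto]|apply Hfd; auto].
Qed.

Lemma cont_on_plus f g : cont_on M U f -> cont_on M U g -> cont_on M U (fun v => f v + g v).
Proof.
  intros Hf Hg x Hx eps Heps.
  destruct (Hf x Hx (eps/2)) as [d1 [Hd1 H1]]; [lra|].
  destruct (Hg x Hx (eps/2)) as [d2 [Hd2 H2]]; [lra|].
  exists (Rmin d1 d2); split; [apply Rmin_pos; auto|].
  intros y Hy Hk.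
  assert (A1 := H1 y Hy (fun k hk => Rlt_le_trans _ _ _ (Hk k hk) (Rmin_l _ _))).
  assert (A2 := H2 y Hy (fun k hk => Rlt_le_trans _ _ _ (Hk k hk) (Rmin_r _ _))).
  replace (f y + g y - (f x + g x)) with ((f y - f x) + (g y - g x)) by ring.
  eapply Rle_lt_trans; [apply Rabs_triang|]. lra.
Qed.

Lemma cont_on_Rpower r f :
  (forall x, U x -> 0 < f x) -> cont_on M U f -> cont_on M U (fun v => Rpower (f v) r).
Proof.
  intros Hpos Hf. apply (cont_on_comp (fun y => Rpower y r)); auto.
  intros x Hx. apply derivable_continuous_pt.
  exists (r * Rpower (f x) (r - 1)). apply derivable_pt_lim_power; auto.
Qed.

Lemma cont_on_mult f g : cont_on M U f -> cont_on M U g -> cont_on M U (fun v => f v * g v).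
Proof.
  intros Hf Hg.
  assert (Hscal : forall c h, cont_on M U h -> cont_on M U (fun v => c * h v)).
  { intros c h Hh. apply (cont_on_comp (fun y => c * y)); auto. intros; reg. }
  assert (Hsqr : forall h, cont_on M U h -> cont_on M U (fun v => h v * h v)).
  { intros h Hh. apply (cont_on_comp (fun y => y * y)); auto. intros; reg. }
  (* polarization: f g = ((f + g)^2 - (f - g)^2) / 4 *)
  apply (cont_on_ext _
    (fun v => / 4 * ((f v + g v) * (f v + g v) + -1 * ((f v + -1 * g v) * (f v + -1 * g v))))).
  { intros; field. }
  apply Hscal, cont_on_plus.
  - apply Hsqr, cont_on_plus; auto.
  - apply Hscal, Hsqr, cont_on_plus, Hscal; auto.
Qed.


Lemma update_same x j : update x j (x j) = x.
Proof.
  apply functional_extensionality; intro k; unfold update.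
  destruct (Nat.eq_dec k j); subst; auto.
Qed.

Lemma Ck_on_S_weaken k f : Ck_on M U (S k) f -> Ck_on M U k f.
Proof.
  revert f; induction k as [|k IH]; intros f [Hc [g [Hg1 Hg2]]]; auto.
  split; auto. exists g; split; auto.
Qed.

Lemma Ck_on_subset V k f : (forall x, V x -> U x) -> Ck_on M U k f -> Ck_on M V k f.
Proof.
  intros HV. revert f; induction k as [|k IH]; intros f; [apply cont_on_subset; exact HV|].
  intros [Hc [g [Hg1 Hg2]]]. split; [apply (cont_on_subset _ _ HV); auto|].
  exists g; split; auto.
Qed.

Lemma Ck_on_ext k f g :
  open_in M U -> (forall x, U x -> f x = g x) -> Ck_on M U k g -> Ck_on M U k f.
Proof.
  intros HU E. destruct k as [|k]; [apply cont_on_ext; exact E|].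
  intros [Hc [dg [Hdg1 Hdg2]]]. split; [apply (cont_on_ext _ _ E); auto|].
  exists dg; split; auto. intros j Hj x Hx.
  destruct (HU x Hx) as [eps [Heps Hball]].
  apply (derivable_pt_lim_locally_ext (fun h => g (update x j h)) _ _ (x j - eps) (x j + eps));
    [lra| |apply Hdg1; auto].
  intros h Hh. symmetry. apply E, Hball. intros k' Hk'. unfold update.
  destruct (Nat.eq_dec k' j) as [->|]; [apply Rabs_def1; lra|].
  rewrite Rminus_diag, Rabs_R0; auto.
Qed.

Lemma Ck_on_const k c : Ck_on M U k (fun _ => c).
Proof.
  revert c; induction k as [|k IH]; intros c; [apply cont_on_const|].
  split; [apply cont_on_const|]. exists (fun _ _ => 0). split; auto.
  intros j Hj x Hx. apply derivable_pt_lim_const.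
Qed.

Lemma Ck_on_proj k m : (m < M)%nat -> Ck_on M U k (fun v => v m).
Proof.
  intros Hm. destruct k as [|k]; [apply cont_on_proj; auto|].
  split; [apply cont_on_proj; auto|].
  exists (fun j _ => if Nat.eq_dec m j then 1 else 0). split.
  - intros j Hj x Hx. unfold partial_at, update.
    destruct (Nat.eq_dec m j); [apply derivable_pt_lim_id|apply derivable_pt_lim_const].
  - intros j Hj. apply Ck_on_const.
Qed.

Lemma Ck_on_plus k f g : Ck_on M U k f -> Ck_on M U k g -> Ck_on M U k (fun v => f v + g v).
Proof.
  revert f g; induction k as [|k IH]; intros f g Hf Hg; [apply cont_on_plus; auto|].
  destruct Hf as [Hcf [df [Hdf1 Hdf2]]], Hg as [Hcg [dg [Hdg1 Hdg2]]].
  split; [apply cont_on_plus; auto|].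
  exists (fun j x => df j x + dg j x). split.
  - intros j Hj x Hx.
    apply (derivable_pt_lim_plus (fun h => f (update x j h)) (fun h => g (update x j h)));
      [apply Hdf1|apply Hdg1]; auto.
  - intros j Hj. apply IH; auto.
Qed.

Lemma Ck_on_mult k f g : Ck_on M U k f -> Ck_on M U k g -> Ck_on M U k (fun v => f v * g v).
Proof.
  revert f g; induction k as [|k IH]; intros f g Hf Hg; [apply cont_on_mult; auto|].
  pose proof (Ck_on_S_weaken _ _ Hf) as Hf0. pose proof (Ck_on_S_weaken _ _ Hg) as Hg0.
  destruct Hf as [Hcf [df [Hdf1 Hdf2]]], Hg as [Hcg [dg [Hdg1 Hdg2]]].
  split; [apply cont_on_mult; auto|].
  exists (fun j x => df j x * g x + f x * dg j x). split.
  - intros j Hj x Hx.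
    pose proof (derivable_pt_lim_mult (fun h => f (update x j h)) (fun h => g (update x j h))
      _ _ _ (Hdf1 j Hj x Hx) (Hdg1 j Hj x Hx)) as D.
    simpl in D. rewrite update_same in D. exact D.
  - intros j Hj. apply Ck_on_plus; apply IH; auto.
Qed.

Lemma Ck_on_Rpower k r f :
  (forall x, U x -> 0 < f x) -> Ck_on M U k f -> Ck_on M U k (fun v => Rpower (f v) r).
Proof.
  intros Hpos. revert r f Hpos; induction k as [|k IH]; intros r f Hpos Hf.
  - apply cont_on_Rpower; auto.
  - pose proof (Ck_on_S_weaken _ _ Hf) as Hf0.
    destruct Hf as [Hcf [df [Hdf1 Hdf2]]].
    split; [apply cont_on_Rpower; auto|].
    exists (fun j x => r * Rpower (f x) (r - 1) * df j x). split.
    + intros j Hj x Hx.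
      assert (P : derivable_pt_lim (fun y => Rpower y r) (f (update x j (x j)))
                    (r * Rpower (f x) (r - 1)))
        by (rewrite update_same; apply derivable_pt_lim_power; auto).
      exact (derivable_pt_lim_comp _ _ _ _ _ (Hdf1 j Hj x Hx) P).
    + intros j Hj. repeat apply Ck_on_mult; auto using Ck_on_const.
Qed.

Lemma smooth_on_subset V f : (forall x, V x -> U x) -> smooth_on M U f -> smooth_on M V f.
Proof. intros HV Hf k. apply (Ck_on_subset V); auto. Qed.

Lemma smooth_on_ext f g :
  open_in M U -> (forall x, U x -> f x = g x) -> smooth_on M U g -> smooth_on M U f.
Proof. intros HU E Hg k. apply (Ck_on_ext _ _ g); auto. Qed.

Lemma smooth_on_const c : smooth_on M U (fun _ => c).
Proof. intro k. apply Ck_on_const. Qed.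

Lemma smooth_on_proj m : (m < M)%nat -> smooth_on M U (fun v => v m).
Proof. intros Hm k. apply Ck_on_proj; auto. Qed.

Lemma smooth_on_plus f g :
  smooth_on M U f -> smooth_on M U g -> smooth_on M U (fun v => f v + g v).
Proof. intros Hf Hg k. apply Ck_on_plus; auto. Qed.

Lemma smooth_on_mult f g :
  smooth_on M U f -> smooth_on M U g -> smooth_on M U (fun v => f v * g v).
Proof. intros Hf Hg k. apply Ck_on_mult; auto. Qed.

Lemma smooth_on_opp f : smooth_on M U f -> smooth_on M U (fun v => - f v).
Proof.
  intros Hf. replace (fun v => - f v) with (fun v => -1 * f v)
    by (apply functional_extensionality; intros; ring).
  apply smooth_on_mult; auto using smooth_on_const.
Qed.

Lemma smooth_on_Rpower r f :
  (forall x, U x -> 0 < f x) -> smooth_on M U f -> smooth_on M U (fun v => Rpower (f v) r).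
Proof. intros Hpos Hf k. apply Ck_on_Rpower; auto. Qed.

Lemma smooth_on_sum_list {A} (l : list A) (F : A -> (nat -> R) -> R) :
  (forall a, In a l -> smooth_on M U (F a)) ->
  smooth_on M U (fun v => sum_list (map (fun a => F a v) l)).
Proof.
  induction l as [|a l IH]; intros HF; [exact (smooth_on_const 0)|].
  apply (smooth_on_plus (F a)); auto using in_eq, in_cons.
Qed.

Lemma smooth_on_prod_list {A} (l : list A) (F : A -> (nat -> R) -> R) :
  (forall a, In a l -> smooth_on M U (F a)) ->
  smooth_on M U (fun v => prod_list (map (fun a => F a v) l)).
Proof.
  induction l as [|a l IH]; intros HF; [exact (smooth_on_const 1)|].
  apply (smooth_on_mult (F a)); auto using in_eq, in_cons.
Qed.

End Smoothness.

Definition same_sign (x y : R) : Prop := 0 < x * y.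

Lemma posb_true x : posb x = true <-> 0 < x.
Proof. unfold posb; destruct (Rlt_dec 0 x); split; auto; discriminate. Qed.

Lemma posb_false x : posb x = false <-> x <= 0.
Proof. unfold posb; destruct (Rlt_dec 0 x); split; intros; try discriminate; lra. Qed.

Lemma same_sign_pos x y : same_sign x y -> 0 < y -> 0 < x.
Proof. unfold same_sign; intros; nra. Qed.

Lemma same_sign_nonpos x y : same_sign x y -> y <= 0 -> x < 0 /\ y < 0.
Proof.
  unfold same_sign; intros Hxy Hy.
  destruct (Req_dec y 0) as [->|]; [lra|]. split; nra.
Qed.

Lemma posb_same_sign x y : same_sign x y -> posb x = posb y.
Proof.
  intros Hxy. destruct (posb y) eqn:Ey.
  - apply posb_true, (same_sign_pos _ y); auto. apply posb_true; auto.
  - apply posb_false. apply posb_false in Ey. destruct (same_sign_nonpos x y); auto; lra.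
Qed.

Lemma Rmin_0_same_sign x y : same_sign x y -> Rmin x 0 = if posb y then 0 else x.
Proof.
  intros Hxy. destruct (posb y) eqn:Ey.
  - apply Rmin_right, Rlt_le, (same_sign_pos _ y); auto. apply posb_true; auto.
  - apply Rmin_left. apply posb_false in Ey. destruct (same_sign_nonpos x y); auto; lra.
Qed.

Lemma Rmax_0_same_sign x y : same_sign x y -> Rmax x 0 = if posb y then x else 0.
Proof.
  intros Hxy. destruct (posb y) eqn:Ey.
  - apply Rmax_left, Rlt_le, (same_sign_pos _ y); auto. apply posb_true; auto.
  - apply Rmax_right. apply posb_false in Ey. destruct (same_sign_nonpos x y); auto; lra.
Qed.

Lemma forallb_posb_same_sign {A} (l : list A) (f e : A -> R) :
  (forall a, In a l -> same_sign (f a) (e a)) ->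
  forallb posb (map f l) = forallb posb (map e l).
Proof.
  induction l as [|a l IH]; intros H; simpl; auto.
  rewrite (posb_same_sign (f a) (e a)), IH; auto using in_eq, in_cons.
Qed.

Lemma existsb_posb_same_sign {A} (l : list A) (f e : A -> R) :
  (forall a, In a l -> same_sign (f a) (e a)) ->
  existsb posb (map f l) = existsb posb (map e l).
Proof.
  induction l as [|a l IH]; intros H; simpl; auto.
  rewrite (posb_same_sign (f a) (e a)), IH; auto using in_eq, in_cons.
Qed.

Lemma sum_list_opp {A} (l : list A) (P : A -> R) :
  sum_list (map (fun a => - P a) l) = - sum_list (map P l).
Proof. induction l as [|a l IH]; simpl; [ring|]. rewrite IH; ring. Qed.

Lemma sum_list_nonneg {A} (l : list A) (P : A -> R) :
  (forall a, In a l -> 0 <= P a) -> 0 <= sum_list (map P l).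
Proof.
  induction l as [|a l IH]; intros H; simpl; [lra|].
  pose proof (H a (in_eq a l)). pose proof (IH (fun b Hb => H b (in_cons a b l Hb))). lra.
Qed.

Lemma sum_list_pos {A} (l : list A) (P : A -> R) :
  (forall a, In a l -> 0 <= P a) -> (exists a, In a l /\ 0 < P a) -> 0 < sum_list (map P l).
Proof.
  induction l as [|a l IH]; intros H [b [Hb Hpb]]; [destruct Hb|]; simpl.
  destruct Hb as [<-|Hb].
  - pose proof (sum_list_nonneg l P (fun c Hc => H c (in_cons a c l Hc))). lra.
  - pose proof (H a (in_eq a l)).
    pose proof (IH (fun c Hc => H c (in_cons a c l Hc)) (ex_intro _ b (conj Hb Hpb))). lra.
Qed.

Lemma prod_list_gt1 {A} (l : list A) (P : A -> R) :
  l <> [] -> (forall a, In a l -> 1 < P a) -> 1 < prod_list (map P l).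
Proof.
  induction l as [|a [|b l] IH]; intros Hl H; [congruence|simpl; pose proof (H a (in_eq a _)); lra|].
  pose proof (H a (in_eq a _)).
  assert (1 < prod_list (map P (b :: l))) by (apply IH; [discriminate|auto using in_cons]).
  simpl in *. nra.
Qed.

Lemma Rpower_1_l x : Rpower 1 x = 1.
Proof. unfold Rpower. rewrite ln_1, Rmult_0_r, exp_0. reflexivity. Qed.

Lemma Rpower_gt1 x y : 1 < x -> 0 < y -> 1 < Rpower x y.
Proof. intros. rewrite <- (Rpower_O x) by lra. apply Rpower_lt; auto. Qed.

Lemma INR_length_pos {A} (l : list A) : l <> [] -> 0 < INR (length l).
Proof. destruct l; [congruence|]. intros _. apply lt_0_INR. simpl; lia. Qed.

Lemma forallb_posb_false {A} (l : list A) (e : A -> R) :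
  forallb posb (map e l) = false -> exists a, In a l /\ e a <= 0.
Proof.
  induction l as [|a l IH]; simpl; [discriminate|].
  destruct (posb (e a)) eqn:Ea; simpl; intros H.
  - destruct (IH H) as [b [Hb Heb]]. exists b; auto using in_cons.
  - exists a; split; [apply in_eq|apply posb_false; auto].
Qed.

Lemma forallb_posb_true {A} (l : list A) (e : A -> R) :
  forallb posb (map e l) = true -> forall a, In a l -> 0 < e a.
Proof.
  rewrite forallb_forall. intros H a Ha. apply posb_true, H, in_map; auto.
Qed.

Lemma existsb_posb_true {A} (l : list A) (e : A -> R) :
  existsb posb (map e l) = true -> exists a, In a l /\ 0 < e a.
Proof.
  rewrite existsb_exists. intros [x [Hx Hpx]]. apply in_map_iff in Hx as [a [<- Ha]].
  exists a; split; auto. apply posb_true; auto.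
Qed.

Lemma existsb_posb_false {A} (l : list A) (e : A -> R) :
  existsb posb (map e l) = false -> forall a, In a l -> e a <= 0.
Proof.
  intros H a Ha. apply posb_false. destruct (posb (e a)) eqn:Ea; auto.
  rewrite <- H. symmetry. apply existsb_exists. exists (e a); split; auto. apply in_map; auto.
Qed.

Lemma agm_and_nil : agm_and [] = 0.
Proof. unfold agm_and; simpl. rewrite Rpower_1_l. ring. Qed.

Lemma agm_or_nil : agm_or [] = 0.
Proof. unfold agm_or; simpl. rewrite Rpower_1_l. ring. Qed.

Lemma agm_and_pos {A} (l : list A) (f : A -> R) :
  l <> [] -> (forall a, In a l -> 0 < f a) -> 0 < agm_and (map f l).
Proof.
  intros Hl Hf. unfold agm_and.
  replace (forallb posb (map f l)) with true
    by (symmetry; apply forallb_forall; intros x Hx; apply in_map_iff in Hx as [a [<- Ha]];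
        apply posb_true; auto).
  rewrite map_map, length_map.
  assert (1 < prod_list (map (fun a => 1 + f a) l))
    by (apply prod_list_gt1; auto; intros a Ha; specialize (Hf a Ha); lra).
  pose proof (Rpower_gt1 _ (/ INR (length l)) H (Rinv_0_lt_compat _ (INR_length_pos l Hl))). lra.
Qed.

Lemma agm_and_neg {A} (l : list A) (f : A -> R) :
  (exists a, In a l /\ f a < 0) -> agm_and (map f l) < 0.
Proof.
  intros [b [Hb Hfb]].
  assert (Hl : l <> []) by (intros ->; destruct Hb).
  unfold agm_and. destruct (forallb posb (map f l)) eqn:E.
  { pose proof (forallb_posb_true l f E b Hb). lra. }
  rewrite map_map, length_map.
  pose proof (sum_list_pos l (fun a => - Rmin (f a) 0)) as Hs.
  rewrite sum_list_opp in Hs.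
  assert (0 < - sum_list (map (fun a => Rmin (f a) 0) l)).
  { apply Hs.
    - intros a _. pose proof (Rmin_r (f a) 0). lra.
    - exists b; split; auto. pose proof (Rmin_l (f b) 0). lra. }
  apply Rdiv_neg_pos; [lra|]. apply INR_length_pos; auto.
Qed.

Lemma agm_or_pos {A} (l : list A) (f : A -> R) :
  (exists a, In a l /\ 0 < f a) -> 0 < agm_or (map f l).
Proof.
  intros [b [Hb Hfb]].
  assert (Hl : l <> []) by (intros ->; destruct Hb).
  unfold agm_or. destruct (existsb posb (map f l)) eqn:E.
  2:{ pose proof (existsb_posb_false l f E b Hb). lra. }
  rewrite map_map, length_map.
  apply Rdiv_lt_0_compat; [|apply INR_length_pos; auto].
  apply sum_list_pos.
  - intros a _. apply Rmax_r.
  - exists b; split; auto. pose proof (Rmax_l (f b) 0). lra.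
Qed.

Lemma agm_or_neg {A} (l : list A) (f : A -> R) :
  l <> [] -> (forall a, In a l -> f a < 0) -> agm_or (map f l) < 0.
Proof.
  intros Hl Hf. unfold agm_or.
  replace (existsb posb (map f l)) with false.
  2:{ symmetry. destruct (existsb posb (map f l)) eqn:E; auto.
      destruct (existsb_posb_true l f E) as [a [Ha Hfa]]. specialize (Hf a Ha). lra. }
  rewrite map_map, length_map.
  assert (1 < prod_list (map (fun a => 1 - f a) l))
    by (apply prod_list_gt1; auto; intros a Ha; specialize (Hf a Ha); lra).
  pose proof (Rpower_gt1 _ (/ INR (length l)) H (Rinv_0_lt_compat _ (INR_length_pos l Hl))). lra.
Qed.

Lemma agm_and_same_sign {A} (l : list A) (f e : A -> R) :
  l <> [] -> (forall a, In a l -> same_sign (f a) (e a)) ->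
  same_sign (agm_and (map f l)) (agm_and (map e l)).
Proof.
  intros Hl H. unfold same_sign.
  destruct (forallb posb (map e l)) eqn:E.
  - pose proof (forallb_posb_true l e E) as He.
    assert (Hf : forall a, In a l -> 0 < f a) by (intros a Ha; apply (same_sign_pos _ (e a)); auto).
    apply Rmult_lt_0_compat; apply agm_and_pos; auto.
  - destruct (forallb_posb_false l e E) as [b [Hb Heb]].
    destruct (same_sign_nonpos (f b) (e b)) as [Hfb Heb']; auto.
    pose proof (agm_and_neg l f (ex_intro _ b (conj Hb Hfb))).
    pose proof (agm_and_neg l e (ex_intro _ b (conj Hb Heb'))). nra.
Qed.

Lemma agm_or_same_sign {A} (l : list A) (f e : A -> R) :
  l <> [] -> (forall a, In a l -> same_sign (f a) (e a)) ->
  same_sign (agm_or (map f l)) (agm_or (map e l)).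
Proof.
  intros Hl H. unfold same_sign.
  destruct (existsb posb (map e l)) eqn:E.
  - destruct (existsb_posb_true l e E) as [b [Hb Heb]].
    assert (0 < f b) by (apply (same_sign_pos _ (e b)); auto).
    apply Rmult_lt_0_compat; apply agm_or_pos; eauto.
  - pose proof (existsb_posb_false l e E) as He.
    assert (Hneg : forall a, In a l -> f a < 0 /\ e a < 0) by (intros; apply same_sign_nonpos; auto).
    pose proof (agm_or_neg l f Hl (fun a Ha => proj1 (Hneg a Ha))).
    pose proof (agm_or_neg l e Hl (fun a Ha => proj2 (Hneg a Ha))). nra.
Qed.

Section SmoothAggregation.

Variables (M : nat) (U : (nat -> R) -> Prop) (A : Type) (l : list A).
Variables (F : A -> (nat -> R) -> R) (e : A -> R).
Hypothesis U_open : open_in M U.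
Hypothesis l_nonempty : l <> [].
Hypothesis F_smooth : forall a, In a l -> smooth_on M U (F a).
Hypothesis F_same_sign : forall a v, In a l -> U v -> same_sign (F a v) (e a).

(* On U every operand keeps a constant sign, so both the branch taken by the
   AGM formula and the sign cut-offs Rmin/Rmax are frozen. *)
Lemma smooth_on_agm_and : smooth_on M U (fun v => agm_and (map (fun a => F a v) l)).
Proof.
  destruct (forallb posb (map e l)) eqn:E.
  - assert (Hpos : forall a v, In a l -> U v -> 0 < F a v)
      by (intros a v Ha Hv; apply (same_sign_pos _ (e a)); auto; apply (forallb_posb_true l e E); auto).
    apply (smooth_on_ext _ _ _
      (fun v => Rpower (prod_list (map (fun a => 1 + F a v) l)) (/ INR (length l)) + -1)); auto.
    + intros v Hv. unfold agm_and.
      rewrite (forallb_posb_same_sign l (fun a => F a v) e), E by auto.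
      rewrite map_map, length_map. ring.
    + apply smooth_on_plus; [|apply smooth_on_const]. apply smooth_on_Rpower.
      * intros v Hv.
        assert (1 < prod_list (map (fun a => 1 + F a v) l)); [|lra].
        apply prod_list_gt1; auto. intros a Ha. specialize (Hpos a v Ha Hv). lra.
      * apply (smooth_on_prod_list M U l (fun a v => 1 + F a v)). intros a Ha.
        apply smooth_on_plus; auto using smooth_on_const.
  - apply (smooth_on_ext _ _ _
      (fun v => sum_list (map (fun a => if posb (e a) then 0 else F a v) l) * / INR (length l))); auto.
    + intros v Hv. unfold agm_and.
      rewrite (forallb_posb_same_sign l (fun a => F a v) e), E by auto.
      rewrite map_map, length_map. unfold Rdiv. do 2 f_equal.
      apply map_ext_in. intros a Ha. apply Rmin_0_same_sign; auto.
    + apply smooth_on_mult; [|apply smooth_on_const].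
      apply (smooth_on_sum_list M U l (fun a v => if posb (e a) then 0 else F a v)).
      intros a Ha. destruct (posb (e a)); auto using smooth_on_const.
Qed.

Lemma smooth_on_agm_or : smooth_on M U (fun v => agm_or (map (fun a => F a v) l)).
Proof.
  destruct (existsb posb (map e l)) eqn:E.
  - apply (smooth_on_ext _ _ _
      (fun v => sum_list (map (fun a => if posb (e a) then F a v else 0) l) * / INR (length l))); auto.
    + intros v Hv. unfold agm_or.
      rewrite (existsb_posb_same_sign l (fun a => F a v) e), E by auto.
      rewrite map_map, length_map. unfold Rdiv. do 2 f_equal.
      apply map_ext_in. intros a Ha. apply Rmax_0_same_sign; auto.
    + apply smooth_on_mult; [|apply smooth_on_const].
      apply (smooth_on_sum_list M U l (fun a v => if posb (e a) then F a v else 0)).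
      intros a Ha. destruct (posb (e a)); auto using smooth_on_const.
  - assert (Hneg : forall a v, In a l -> U v -> F a v < 0)
      by (intros a v Ha Hv; apply (same_sign_nonpos _ (e a)); auto;
          apply (existsb_posb_false l e E); auto).
    apply (smooth_on_ext _ _ _
      (fun v => 1 + - Rpower (prod_list (map (fun a => 1 - F a v) l)) (/ INR (length l)))); auto.
    + intros v Hv. unfold agm_or.
      rewrite (existsb_posb_same_sign l (fun a => F a v) e), E by auto.
      rewrite map_map, length_map. ring.
    + apply smooth_on_plus; [apply smooth_on_const|]. apply smooth_on_opp, smooth_on_Rpower.
      * intros v Hv.
        assert (1 < prod_list (map (fun a => 1 - F a v) l)); [|lra].
        apply prod_list_gt1; auto. intros a Ha. specialize (Hneg a v Ha Hv). lra.
      * apply (smooth_on_prod_list M U l (fun a v => 1 - F a v)). intros a Ha.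
        apply smooth_on_plus; [apply smooth_on_const|apply smooth_on_opp; auto].
Qed.

End SmoothAggregation.

Section StableSign.

Variables (M : nat) (x0 : nat -> R).

Definition ball (d : R) (v : nat -> R) : Prop :=
  forall k, (k < M)%nat -> Rabs (v k - x0 k) < d.

Definition smooth_sign_stable (d : R) (f : (nat -> R) -> R) : Prop :=
  smooth_on M (ball d) f /\ forall v, ball d v -> same_sign (f v) (f x0).

Lemma ball_center d : 0 < d -> ball d x0.
Proof. intros Hd k _. rewrite Rminus_diag, Rabs_R0; auto. Qed.

Lemma finite_min_pos N (a : nat -> R) :
  (forall k, (k < N)%nat -> 0 < a k) -> exists e, 0 < e /\ forall k, (k < N)%nat -> e <= a k.
Proof.
  induction N as [|N IH]; intros H; [exists 1; split; [lra|intros; lia]|].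
  destruct IH as [e [He He']]; [intros; apply H; lia|].
  exists (Rmin e (a N)); split; [apply Rmin_pos; auto|].
  intros k Hk. destruct (Nat.eq_dec k N) as [->|]; [apply Rmin_r|].
  eapply Rle_trans; [apply Rmin_l|apply He'; lia].
Qed.

Lemma ball_open d : open_in M (ball d).
Proof.
  intros v Hv. destruct (finite_min_pos M (fun k => d - Rabs (v k - x0 k))) as [e [He He']].
  { intros k Hk. specialize (Hv k Hk). lra. }
  exists e; split; auto. intros y Hy k Hk. specialize (Hy k Hk). specialize (He' k Hk).
  replace (y k - x0 k) with ((y k - v k) + (v k - x0 k)) by ring.
  eapply Rle_lt_trans; [apply Rabs_triang|]. lra.
Qed.

Lemma smooth_sign_stable_shrink d d' f :
  d' <= d -> smooth_sign_stable d f -> smooth_sign_stable d' f.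
Proof.
  intros Hd [Hsm Hsg].
  assert (Hsub : forall v, ball d' v -> ball d v) by (intros v Hv k Hk; specialize (Hv k Hk); lra).
  split; [apply (smooth_on_subset _ _ _ _ Hsub Hsm)|auto].
Qed.

Lemma common_radius {A} (l : list A) (F : A -> (nat -> R) -> R) :
  (forall a, In a l -> exists d, 0 < d /\ smooth_sign_stable d (F a)) ->
  exists d, 0 < d /\ forall a, In a l -> smooth_sign_stable d (F a).
Proof.
  induction l as [|a l IH]; intros H; [exists 1; split; [lra|intros _ []]|].
  destruct IH as [d1 [Hd1 H1]]; [auto using in_cons|].
  destruct (H a (in_eq a l)) as [d2 [Hd2 H2]].
  exists (Rmin d1 d2); split; [apply Rmin_pos; auto|].
  intros b [<-|Hb].
  - apply (smooth_sign_stable_shrink d2); [apply Rmin_r|auto].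
  - apply (smooth_sign_stable_shrink d1); [apply Rmin_l|auto].
Qed.

Lemma smooth_sign_stable_const c : c <> 0 -> smooth_sign_stable 1 (fun _ => c).
Proof.
  intros Hc. split; [apply smooth_on_const|]. intros v _. unfold same_sign.
  apply Rsqr_pos_lt; auto.
Qed.

Lemma smooth_sign_stable_pred k pi :
  (k < M)%nat -> x0 k <> pi ->
  smooth_sign_stable (Rabs (x0 k - pi)) (fun v => (v k - pi) / 2).
Proof.
  intros Hk Hpi. split.
  - apply smooth_on_mult; [|apply smooth_on_const].
    apply smooth_on_plus; [apply smooth_on_proj; auto|apply smooth_on_const].
  - intros v Hv. specialize (Hv k Hk). unfold same_sign.
    destruct (Rcase_abs (x0 k - pi)) as [N|P];
      [rewrite (Rabs_left _ N) in Hv|rewrite (Rabs_right _ P) in Hv];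
      apply Rabs_def2 in Hv; unfold Rdiv; nra.
Qed.

Lemma smooth_sign_stable_opp d f : smooth_sign_stable d f -> smooth_sign_stable d (fun v => - f v).
Proof.
  intros [Hsm Hsg]. split; [apply smooth_on_opp; auto|].
  intros v Hv. specialize (Hsg v Hv). unfold same_sign in *. nra.
Qed.

Lemma smooth_sign_stable_agm_and {A} (l : list A) (F : A -> (nat -> R) -> R) :
  agm_and (map (fun a => F a x0) l) <> 0 ->
  (forall a, In a l -> exists d, 0 < d /\ smooth_sign_stable d (F a)) ->
  exists d, 0 < d /\ smooth_sign_stable d (fun v => agm_and (map (fun a => F a v) l)).
Proof.
  intros Hnz HF. destruct (common_radius l F HF) as [d [Hd Hl]].
  assert (Hne : l <> []) by (intros ->; apply Hnz, agm_and_nil).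
  exists d; split; auto. split.
  - apply (smooth_on_agm_and _ _ _ l F (fun a => F a x0)); auto using ball_open.
    + intros a Ha. apply Hl; auto.
    + intros a v Ha Hv. apply Hl; auto.
  - intros v Hv. apply agm_and_same_sign; auto. intros a Ha. apply Hl; auto.
Qed.

Lemma smooth_sign_stable_agm_or {A} (l : list A) (F : A -> (nat -> R) -> R) :
  agm_or (map (fun a => F a x0) l) <> 0 ->
  (forall a, In a l -> exists d, 0 < d /\ smooth_sign_stable d (F a)) ->
  exists d, 0 < d /\ smooth_sign_stable d (fun v => agm_or (map (fun a => F a v) l)).
Proof.
  intros Hnz HF. destruct (common_radius l F HF) as [d [Hd Hl]].
  assert (Hne : l <> []) by (intros ->; apply Hnz, agm_or_nil).
  exists d; split; auto. split.
  - apply (smooth_on_agm_or _ _ _ l F (fun a => F a x0)); auto using ball_open.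
    + intros a Ha. apply Hl; auto.
    + intros a v Ha Hv. apply Hl; auto.
  - intros v Hv. apply agm_or_same_sign; auto. intros a Ha. apply Hl; auto.
Qed.

End StableSign.

Fixpoint stl_nested_ind (P : stl -> Prop)
  (HT : P STop) (HB : P SBot) (HP : forall i pi, P (SPred i pi))
  (HN : forall psi, P psi -> P (SNeg psi))
  (HA : forall l, (forall psi, In psi l -> P psi) -> P (SAnd l))
  (HO : forall l, (forall psi, In psi l -> P psi) -> P (SOr l))
  (HG : forall a b psi, P psi -> P (SG a b psi))
  (HF : forall a b psi, P psi -> P (SF a b psi))
  (phi : stl) {struct phi} : P phi :=
  let IH := stl_nested_ind P HT HB HP HN HA HO HG HF in
  let fix on_list (l : list stl) : forall psi, In psi l -> P psi :=
    match l as l0 return forall psi, In psi l0 -> P psi with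
    | [] => fun psi H => False_ind _ H
    | q :: l' => fun psi H =>
        match H with
        | or_introl E => eq_ind q P (IH q) psi E
        | or_intror H' => on_list l' psi H'
        end
    end in
  match phi with
  | STop => HT
  | SBot => HB
  | SPred i pi => HP i pi
  | SNeg psi => HN psi (IH psi)
  | SAnd l => HA l (on_list l)
  | SOr l => HO l (on_list l)
  | SG a b psi => HG a b psi (IH psi)
  | SF a b psi => HF a b psi (IH psi)
  end.

Definition coords (L : list (nat * R)) (v : nat -> R) : nat -> R -> R :=
  fun i x => v (idx L (i, x)).

Definition sample (L : list (nat * R)) (S : nat -> R -> R) : nat -> R :=
  fun k => S (fst (nth k L (O, 0))) (snd (nth k L (O, 0))).

Lemma nth_idx L p d : In p L -> nth (idx L p) L d = p /\ (idx L p < length L)%nat.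
Proof.
  induction L as [|q L IH]; intros Hp; [destruct Hp|]. simpl.
  destruct (pair_eq_dec p q) as [->|Hpq]; [split; auto; lia|].
  destruct Hp as [<-|Hp]; [congruence|]. destruct (IH Hp); split; auto; lia.
Qed.

Lemma coords_sample L S i x : In (i, x) L -> coords L (sample L S) i x = S i x.
Proof.
  intros Hin. unfold coords, sample. destruct (nth_idx L (i, x) (O, 0) Hin) as [-> _].
  reflexivity.
Qed.

Section Evaluation.

Variables (tau : R -> Prop) (win : R -> R -> R -> list R) (phi : stl) (t : R).
Variable L : list (nat * R).
Hypothesis win_sound : forall t0 a b x, In x (win t0 a b) -> tau x /\ t0 + a <= x <= t0 + b.
Hypothesis preds_in_L : forall i pi t', inE tau phi t (SPred i pi) t' -> In (i, t') L.

Lemma eta_sample S : forall psi t', inE tau phi t psi t' ->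
  eta win S psi t' = eta win (coords L (sample L S)) psi t'.
Proof.
  intros psi.
  induction psi as [| |i pi|psi IH|l IH|l IH|a b psi IH|a b psi IH] using stl_nested_ind;
    intros t' Hin; simpl; auto.
  - rewrite coords_sample; eauto.
  - f_equal. apply IH. eapply E_neg; eauto.
  - f_equal. apply map_ext_in. intros psi Hpsi. apply IH; auto. eapply E_and; eauto.
  - f_equal. apply map_ext_in. intros psi Hpsi. apply IH; auto. eapply E_or; eauto.
  - f_equal. apply map_ext_in. intros t'' Ht''. destruct (win_sound _ _ _ _ Ht'').
    apply IH. eapply E_G; eauto.
  - f_equal. apply map_ext_in. intros t'' Ht''. destruct (win_sound _ _ _ _ Ht'').
    apply IH. eapply E_F; eauto.
Qed.

Variable x0 : nat -> R.
Hypothesis eta_nonzero :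
  forall psi t', inE tau phi t psi t' -> eta win (coords L x0) psi t' <> 0.

Lemma eta_smooth_sign_stable : forall psi t', inE tau phi t psi t' ->
  exists d, 0 < d /\ smooth_sign_stable (length L) x0 d (fun v => eta win (coords L v) psi t').
Proof.
  intros psi.
  induction psi as [| |i pi|psi IH|l IH|l IH|a b psi IH|a b psi IH] using stl_nested_ind;
    intros t' Hin; pose proof (eta_nonzero _ _ Hin) as Hnz; simpl in Hnz.
  - exists 1; split; [lra|]. apply (smooth_sign_stable_const _ _ 1); lra.
  - exists 1; split; [lra|]. apply (smooth_sign_stable_const _ _ (-1)); lra.
  - destruct (nth_idx L (i, t') (O, 0)) as [_ Hk]; [eauto|].
    assert (Hpi : x0 (idx L (i, t')) <> pi)
      by (intros E; apply Hnz; unfold coords; rewrite E; unfold Rdiv; ring).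
    exists (Rabs (x0 (idx L (i, t')) - pi)); split; [apply Rabs_pos_lt; lra|].
    apply smooth_sign_stable_pred; auto.
  - destruct (IH t') as [d [Hd Hst]]; [eapply E_neg; eauto|].
    exists d; split; auto. apply smooth_sign_stable_opp; auto.
  - apply (smooth_sign_stable_agm_and _ _ l (fun psi v => eta win (coords L v) psi t')); auto.
    intros psi Hpsi. apply IH; auto. eapply E_and; eauto.
  - apply (smooth_sign_stable_agm_or _ _ l (fun psi v => eta win (coords L v) psi t')); auto.
    intros psi Hpsi. apply IH; auto. eapply E_or; eauto.
  - apply (smooth_sign_stable_agm_and _ _ (win t' a b) (fun t'' v => eta win (coords L v) psi t''));
      auto.
    intros t'' Ht''. destruct (win_sound _ _ _ _ Ht''). apply IH. eapply E_G; eauto.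
  - apply (smooth_sign_stable_agm_or _ _ (win t' a b) (fun t'' v => eta win (coords L v) psi t''));
      auto.
    intros t'' Ht''. destruct (win_sound _ _ _ _ Ht''). apply IH. eapply E_F; eauto.
Qed.

End Evaluation.

Theorem mainTheorem7
  (tau : R -> Prop) (win : R -> R -> R -> list R) (n : nat)
  (phi : stl) (t : R) (S : nat -> R -> R) (L : list (nat * R)) :
  (* tau is a set of nonnegative times; win t a b enumerates [t+a,t+b] ∩ tau *)
  (forall x, tau x -> 0 <= x) ->
  (forall t0 a b x, In x (win t0 a b) <-> tau x /\ t0 + a <= x <= t0 + b) ->
  (forall t0 a b, NoDup (win t0 a b)) ->
  wf n phi -> tau t ->
  (* the intervals used in evaluating phi at t are nonempty *)
  (forall a b psi t', (inE tau phi t (SG a b psi) t' \/ inE tau phi t (SF a b psi) t')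
                      -> win t' a b <> nil) ->
  (* S is a signal with values in [-1,1]^n *)
  (forall i x, (1 <= i <= n)%nat -> tau x -> -1 <= S i x <= 1) ->
  (* no subformula robustness vanishes at its evaluation time *)
  (forall psi t', inE tau phi t psi t' -> eta win S psi t' <> 0) ->
  (* L enumerates V (without repetition); M = |V| = length L *)
  NoDup L ->
  (forall p, In p L <-> exists pi, inE tau phi t (SPred (fst p) pi) (snd p)) ->
  let M := length L in
  let vS := fun (S' : nat -> R -> R) (k : nat) =>
              S' (fst (nth k L (O, 0))) (snd (nth k L (O, 0))) in
  let H := fun v : nat -> R => eta win (fun i x => v (idx L (i, x))) phi t in
  (forall S' : nat -> R -> R,
     (forall i x, (1 <= i <= n)%nat -> tau x -> -1 <= S' i x <= 1) ->
     eta win S' phi t = H (vS S')) /\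
  exists U : (nat -> R) -> Prop,
    open_in M U /\ U (vS S) /\ smooth_on M U H.
Proof.
  (* Nonemptiness of the windows and of the operand lists is implied by the
     nonvanishing hypothesis (an empty aggregation evaluates to 0). *)
  intros _ Hwin _ _ _ _ _ Hnz _ HL M vS H.
  assert (Hsound : forall t0 a b x, In x (win t0 a b) -> tau x /\ t0 + a <= x <= t0 + b)
    by (intros; apply Hwin; auto).
  assert (Hpreds : forall i pi t', inE tau phi t (SPred i pi) t' -> In (i, t') L)
    by (intros i pi t' Hin; apply HL; exists pi; auto).
  split.
  - intros S' _. apply (eta_sample tau win phi t L Hsound Hpreds S'). constructor.
  - assert (Hnz0 : forall psi t', inE tau phi t psi t' ->
                     eta win (coords L (sample L S)) psi t' <> 0)
      by (intros psi t' Hin; rewrite <- (eta_sample tau win phi t L Hsound Hpreds S); auto).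
    destruct (eta_smooth_sign_stable tau win phi t L Hsound Hpreds (sample L S) Hnz0 phi t)
      as [d [Hd [Hsm _]]]; [constructor|].
    exists (ball M (vS S) d).
    split; [apply ball_open|split; [apply ball_center; auto|exact Hsm]].
Qed.
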